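(* Let $d\ge1$ and let $\tau$ be a (closed) simplex in $\mathbb{R}^d$. Then the characteristic function $\chi_\tau$ of $\tau$ can be written as a function in $\mathrm{HNN}_k$ with $k\sim\mathcal O(\lceil\log_2(d+1)\rceil)$ and size $s\sim\mathcal O(2(d+1))$.
   Context: $\mathrm{HNN}_k$ denotes the class of functions $f:\mathbb{R}^d\to\mathbb{R}$ of the form $f(x)=\Theta^k\circ\sigma\circ\Theta^{k-1}\circ\sigma\circ\cdots\circ\Theta^1\circ\sigma_s\circ\Theta^0(x)$, where $\Theta^j:\mathbb{R}^{n_j}\to\mathbb{R}^{n_{j+1}}$ are affine maps, $n_0=d$, $n_{k+1}=1$, $\sigma=\mathrm{ReLU}$ and $\sigma_s=H$ is the Heaviside step function ($H(t)=1$ for $t\ge0$, $H(t)=0$ for $t<0$), each activation applied componentwise. $k$ is the number of hidden layers and the size of the network is $s=\sum_{0\le i\le k}n_i$. *)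

From HB Require Import structures.
From mathcomp Require Import all_boot all_order all_algebra.
From mathcomp Require Import reals.
From mathcomp Require Import classical.boolp.
Set Implicit Arguments. Unset Strict Implicit. Unset Printing Implicit Defensive.
Import Order.TTheory GRing.Theory Num.Theory.
Local Open Scope ring_scope.

Section HNN.
Variable R : realType.

Definition heaviside (t : R) : R := if 0 <= t then 1 else 0.
Definition relu (t : R) : R := Num.max t 0.

(* A network in HNN_k with input dimension d and k = k'.+1 hidden layers.
   hw i = n_i is the width of hidden layer i (1 <= i <= k); n_0 = d, n_{k+1} = 1.
   Theta^0 = (W0, b0) : R^d -> R^{n_1};
   Theta^j = (Wh (j-1), bh (j-1)) : R^{n_j} -> R^{n_{j+1}} for 1 <= j < k;
   Theta^k = (Wo, bo) : R^{n_k} -> R.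
   (Wh j, bh j for j >= k' are unused.) *)
Record hnn (d k' : nat) := HNN {
  hw : nat -> nat;
  W0 : 'M[R]_(hw 1, d);
  b0 : 'cV[R]_(hw 1);
  Wh : forall j : nat, 'M[R]_(hw j.+2, hw j.+1);
  bh : forall j : nat, 'cV[R]_(hw j.+2);
  Wo : 'M[R]_(1, hw k'.+1);
  bo : R }.

Fixpoint hnn_hidden d k' (N : hnn d k') (x : 'cV[R]_d) (j : nat)
    : 'cV[R]_(hw N j.+1) :=
  match j with
  | 0 => map_mx heaviside (W0 N *m x + b0 N)
  | j'.+1 => map_mx relu (Wh N j' *m hnn_hidden N x j' + bh N j')
  end.

Definition hnn_eval d k' (N : hnn d k') (x : 'cV[R]_d) : R :=
  (Wo N *m hnn_hidden N x k') 0 0 + bo N.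

Definition hnn_size d k' (N : hnn d k') : nat :=
  (d + \sum_(1 <= i < k'.+2) hw N i)%N.

Definition affinely_independent d (v : 'I_d.+1 -> 'cV[R]_d) : Prop :=
  forall mu : 'I_d.+1 -> R,
    \sum_i mu i = 0 -> \sum_i mu i *: v i = 0 -> forall i, mu i = 0.

Definition simplex d (v : 'I_d.+1 -> 'cV[R]_d) (x : 'cV[R]_d) : Prop :=
  exists lam : 'I_d.+1 -> R,
    (forall i, 0 <= lam i) /\ \sum_i lam i = 1 /\ x = \sum_i lam i *: v i.

Definition charfun d (P : 'cV[R]_d -> Prop) (x : 'cV[R]_d) : R :=
  if `[< P x >] then 1 else 0.
End HNN.

From HB Require Import structures.
From mathcomp Require Import all_boot all_order all_algebra.
From mathcomp Require Import reals.
From mathcomp Require Import zify.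
From mathcomp Require Import classical.boolp.
Import Order.TTheory GRing.Theory Num.Theory.
Local Open Scope ring_scope.

(* The barycentric coordinates of x with respect to affinely independent
   vertices v_0, ..., v_d are obtained by inverting the matrix whose columns
   are (1; v_j), so they are an affine function of x, and x lies in the simplex
   iff all d+1 of them are nonnegative.  A Heaviside layer of width d+1 thus
   computes the indicators of these d+1 half-spaces, and the single ReLU neuron
   ReLU(sum - d) is their conjunction: two hidden layers and size
   d + (d+1) + 1. *)

Set Implicit Arguments.
Unset Strict Implicit.
Unset Printing Implicit Defensive.

Section Barycentric.
Variables (R : realType) (d : nat) (v : 'I_d.+1 -> 'cV[R]_d).

Definition vertex_mx : 'M[R]_(1 + d, d.+1) :=
  col_mx (const_mx 1) (\matrix_(k, j) v j k 0).

Lemma vertex_mxE (mu : 'cV[R]_d.+1) :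
  vertex_mx *m mu = col_mx (\sum_i mu i 0)%:M (\sum_i mu i 0 *: v i).
Proof.
rewrite mul_col_mx; congr col_mx; apply/matrixP => k z; rewrite [z]ord1 !mxE.
  by rewrite [k]ord1 mulr1n; apply: eq_bigr => j _; rewrite mxE mul1r.
by rewrite summxE; apply: eq_bigr => j _; rewrite !mxE mulrC.
Qed.

Lemma simplex_vertex_mx x : simplex v x <->
  exists2 lam : 'cV[R]_d.+1, forall i, 0 <= lam i 0 & vertex_mx *m lam = col_mx 1 x.
Proof.
split=> [[lam [lam_ge0 [lam_sum ->]]] | [lam lam_ge0]].
  exists (\col_i lam i) => [i|]; first by rewrite mxE.
  rewrite vertex_mxE (eq_bigr lam) => [|i _]; last by rewrite mxE.
  by rewrite lam_sum; congr col_mx; apply: eq_bigr => i _; rewrite mxE.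
rewrite vertex_mxE => /eq_col_mx[/matrixP/(_ 0 0) lam_sum <-].
exists (fun i => lam i 0); split => //; split => //.
by move: lam_sum; rewrite !mxE mulr1n.
Qed.

Hypothesis v_indep : affinely_independent v.

Lemma vertex_mx_unit : (vertex_mx : 'M_d.+1) \in unitmx.
Proof.
rewrite -unitmx_tr -row_free_unit; apply: inj_row_free => u.
move/(congr1 trmx); rewrite trmx_mul trmxK trmx0 vertex_mxE => /eqP.
rewrite (@col_mx_eq0 _ 1 d) => /andP[/eqP/matrixP/(_ 0 0) sum0 /eqP comb0].
rewrite !mxE mulr1n in sum0.
apply/matrixP => i j; rewrite [i]ord1 mxE.
by have := v_indep sum0 comb0 j; rewrite mxE.
Qed.

Definition bary_mx : 'M[R]_(1 + d) := invmx vertex_mx.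

Lemma simplex_bary x : simplex v x <->
  forall i, 0 <= (rsubmx bary_mx *m x + lsubmx bary_mx) i 0.
Proof.
have -> : rsubmx bary_mx *m x + lsubmx bary_mx = bary_mx *m col_mx 1 x.
  by rewrite -{3}[bary_mx]hsubmxK mul_row_col mulmx1 addrC.
rewrite simplex_vertex_mx; split=> [[lam lam_ge0 <-] | bary_ge0].
  by rewrite mulmxA mulVmx ?vertex_mx_unit // mul1mx.
by exists (bary_mx *m col_mx 1 x) => //; rewrite mulmxA mulmxV ?vertex_mx_unit // mul1mx.
Qed.

End Barycentric.

Section HalfspaceNet.
Variable R : realType.

Lemma heaviside_le1 (s : R) : heaviside s <= 1.
Proof. by rewrite /heaviside; case: ifP. Qed.

Lemma relu_sum_heaviside n (t : 'I_n.+1 -> R) :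
  relu (\sum_j heaviside (t j) - n%:R) = if [forall j, 0 <= t j] then 1 else 0.
Proof.
case: forallP => [t_ge0 | /existsNP[i /negP]]; last rewrite -ltNge => ti_lt0.
  rewrite (eq_bigr (fun=> 1)) => [|j _]; last by rewrite /heaviside t_ge0.
  by rewrite sumr_const card_ord -natrB // subSnn /relu max_l ?ler01.
have Hi0 : heaviside (t i) = 0 by rewrite /heaviside leNgt ti_lt0.
have card_others : #|predC1 i| = n by rewrite cardC1 card_ord.
rewrite /relu max_r // subr_le0 (bigD1 i) //= Hi0 add0r.
apply: (le_trans (ler_sum _ (fun j _ => heaviside_le1 (t j)))).
by rewrite sumr_const card_others.
Qed.

Variables (d m : nat) (A : 'M[R]_(m.+1, d)) (c : 'cV[R]_m.+1).

Definition halfspace_net : hnn R d 1 :=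
  @HNN R d 1 (fun n => if n is 1 then m.+1 else 1) A c
    (fun _ => const_mx 1) (fun _ => const_mx (- m%:R)) (const_mx 1) 0.

Lemma halfspace_net_size : hnn_size halfspace_net = (d + m.+2)%N.
Proof. by rewrite /hnn_size big_ltn // big_ltn // big_geq // addn0 addn1. Qed.

Lemma halfspace_net_eval x :
  hnn_eval halfspace_net x = charfun (fun y => forall i, 0 <= (A *m y + c) i 0) x.
Proof.
rewrite /hnn_eval /= !mxE big_ord1 !mxE mul1r addr0.
under eq_bigr do rewrite !mxE mul1r.
rewrite relu_sum_heaviside /charfun.
congr (if _ then _ else _); apply/esym/(asbool_equiv_eqP forallP).
by split=> ge0 i; move: (ge0 i); rewrite !mxE.
Qed.

End HalfspaceNet.

Theorem mainTheorem12 (R : realType) :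
  exists C : nat,
    forall (d : nat), (1 <= d)%N ->
    forall v : 'I_d.+1 -> 'cV[R]_d, affinely_independent v ->
    exists (k' : nat) (N : hnn R d k'),
      (k'.+1 <= C * up_log 2 d.+1)%N /\
      (hnn_size N <= C * (2 * d.+1))%N /\
      forall x : 'cV[R]_d, hnn_eval N x = charfun (simplex v) x.
Proof.
exists 2%N => d d_gt0 v v_indep.
pose B := bary_mx v.
exists 1%N, (halfspace_net (rsubmx B) (lsubmx B)); split; [|split].
- by rewrite -{1}[2%N]muln1 leq_pmul2l // up_log_gt0.
- by rewrite halfspace_net_size; lia.
- move=> x; rewrite halfspace_net_eval /charfun.
  by rewrite (asbool_equiv_eq (simplex_bary v_indep x)).
Qed.
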